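(* The set $\Gamma_{\mathcal{T}}$ of all finite branches that are not refutable in the tableau calculus $\mathcal{T}$ is an abstract consistency class.
   Context: Types: a countable set of base types including a distinguished $o$; other base types are sorts ($\alpha$). Types: base types and $\sigma\tau$ (functions from $\sigma$ to $\tau$; $\sigma\tau\mu=\sigma(\tau\mu)$). Countably many names, each with a unique type, infinitely many of each type. Terms: names; $st:\mu$ for $s:\tau\mu,t:\tau$; $\lambda x.t:\sigma\tau$ for a name $x:\sigma$, $t:\tau$. Logical constants: $\neg:oo$, $=_\sigma:\sigma\sigma o$; other names are variables. Formulas: terms of type $o$; $s=_\sigma t$ is $(=_\sigma s)t$; $s\neq_\sigma t$ is $\neg(s=_\sigma t)$. A fixed type-preserving total normalization operator $[\cdot]$ on terms is given; $s$ is normal iff $[s]=s$; $[[s]]=[s]$, $[[s]t]=[st]$, and $[xs_1\dots s_n]=x[s_1]\dots[s_n]$ for every name $x$, $n\ge0$, with $xs_1\dots s_n$ of base type. A branch is a set of normal formulas. Tableau calculus $\mathcal{T}$: a rule instance $A/A_1\dots A_n$ has $A$ a finite branch containing the premises, $A_i=A\cup$(formulas of the $i$-th alternative). Rules ($x$ a variable): (DN) $\neg\neg s$ / $s$. (BQ) $s=_ot$ / $\{s,t\}\mid\{\neg s,\neg t\}$. (BE) $s\neq_o t$ / $\{s,\neg t\}\mid\{\neg s,t\}$. (FQ) $s=_{\sigma\tau}t$ / $[su]=[tu]$, $u:\sigma$ normal. (FE) $s\neq_{\sigma\tau}t$ / $[sx]\neq[tx]$, $x:\sigma$ not free in $A$.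 (Mat) $xs_1\dots s_n,\neg xt_1\dots t_n$ / $s_1\neq t_1\mid\dots\mid s_n\neq t_n$ ($n\ge0$). (Dec) $xs_1\dots s_n\neq_\alpha xt_1\dots t_n$ / $s_1\neq t_1\mid\dots\mid s_n\neq t_n$ ($n\ge0$). (Con) $s=_\alpha t,u\neq_\alpha v$ / $\{s\neq u,t\neq u\}\mid\{s\neq v,t\neq v\}$. $A$ is closed if $x,\neg x\in A$ for a variable $x:o$ or $x\neq_\alpha x\in A$ for a variable $x:\alpha$. Restrictions: (1) instances with $A$ closed are admitted only for Mat or Dec with $n=0$; (2) FE on $s\neq t\in A$ only if no variable $x$ has $[sx]\neq[tx]\in A$. Refutable: least set of branches such that if $A/A_1\dots A_n$ is an admitted instance and all $A_i$ are refutable then $A$ is refutable. An abstract consistency class is a set $\Gamma$ of branches such that every $A\in\Gamma$ satisfies: (DN) if $\neg\neg s\in A$ then $A\cup\{s\}\in\Gamma$; (BQ) if $s=_ot\in A$ then $A\cup\{s,t\}\in\Gamma$ or $A\cup\{\neg s,\neg t\}\in\Gamma$; (BE) if $s\neq_ot\in A$ then $A\cup\{s,\neg t\}\in\Gamma$ or $A\cup\{\neg s,t\}\in\Gamma$; (FQ) if $s=_{\sigma\tau}t\in A$ then $A\cup\{[su]=[tu]\}\in\Gamma$ for every normal $u:\sigma$; (FE) if $s\neq_{\sigma\tau}t\in A$ then $A\cup\{[sx]\neq[tx]\}\in\Gamma$ for some variable $x$; (Mat) if $xs_1\dots s_n,\neg xt_1\dots t_n\in A$ then $n\ge1$ and $A\cup\{s_i\neq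 t_i\}\in\Gamma$ for some $i$; (Dec) if $xs_1\dots s_n\neq_\alpha xt_1\dots t_n\in A$ then $n\ge1$ and $A\cup\{s_i\neq t_i\}\in\Gamma$ for some $i$; (Con) if $s=_\alpha t,u\neq_\alpha v\in A$ then $A\cup\{s\neq u,t\neq u\}\in\Gamma$ or $A\cup\{s\neq v,t\neq v\}\in\Gamma$. *)

From mathcomp Require Import ssreflect ssrfun ssrbool eqtype choice.
From Stdlib Require Import List.
Set Implicit Arguments.
Unset Strict Implicit.

Inductive ty (B : Type) : Type :=
| Base : B -> ty B
| Arr  : ty B -> ty B -> ty B.
Arguments Base {B} b.
Arguments Arr {B} s t.

Inductive tm (N : Type) : Type :=
| Nm : N -> tm N
| Ap : tm N -> tm N -> tm N
| Lm : N -> tm N -> tm N.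
Arguments Nm {N} x.
Arguments Ap {N} s t.
Arguments Lm {N} x t.

Section Setting.
Context {B : Type} (o : B) {N : Type} (nty : N -> ty B) (neg : N)
        (eqn : ty B -> N) (nf : tm N -> tm N).

Fixpoint arrows (l : list (ty B)) (b : ty B) : ty B :=
  match l with nil => b | a :: l' => Arr a (arrows l' b) end.

Definition apps (h : tm N) (l : list (tm N)) : tm N :=
  fold_left (fun h s => Ap h s) l h.

Inductive has_ty : tm N -> ty B -> Prop :=
| ty_nm x : has_ty (Nm x) (nty x)
| ty_ap s t T U : has_ty s (Arr T U) -> has_ty t T -> has_ty (Ap s t) U
| ty_lm x t U : has_ty t U -> has_ty (Lm x t) (Arr (nty x) U).

Definition isvar (x : N) : Prop := x <> neg /\ forall T, x <> eqn T.

Fixpoint free (x : N) (t : tm N) : Prop :=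
  match t with
  | Nm y => x = y
  | Ap s u => free x s \/ free x u
  | Lm y u => x <> y /\ free x u
  end.

Definition mkneg (s : tm N) : tm N := Ap (Nm neg) s.
Definition mkeq (T : ty B) (s t : tm N) : tm N := Ap (Ap (Nm (eqn T)) s) t.
Definition mkneq (T : ty B) (s t : tm N) : tm N := mkneg (mkeq T s t).

Definition normal (s : tm N) : Prop := nf s = s.

Definition branch := tm N -> Prop.
Definition is_branch (A : branch) : Prop :=
  forall s, A s -> has_ty s (Base o) /\ normal s.
Definition finite (A : branch) : Prop :=
  exists l : list (tm N), forall s, A s <-> In s l.
Definition fin_branch (A : branch) : Prop := is_branch A /\ finite A.

Definition ext (A : branch) (F : list (tm N)) : branch :=
  fun u => A u \/ In u F.

Definition sort (a : B) : Prop := a <> o.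

Definition closed (A : branch) : Prop :=
  (exists x, isvar x /\ nty x = Base o /\ A (Nm x) /\ A (mkneg (Nm x))) \/
  (exists x a, isvar x /\ sort a /\ nty x = Base a /\
               A (mkneq (Base a) (Nm x) (Nm x))).

Definition dec_alts (tys : list (ty B)) (ss ts : list (tm N))
  : list (list (tm N)) :=
  map (fun p => mkneq (fst p) (fst (snd p)) (snd (snd p)) :: nil)
      (combine tys (combine ss ts)).

(* Admitted rule instances A / A_1 ... A_n of the calculus T, with
   A_i = ext A (alts_i).  Restrictions (1) and (2) are built in. *)
Inductive instance (A : branch) : list (list (tm N)) -> Prop :=
| R_DN s : ~ closed A -> A (mkneg (mkneg s)) ->
    instance A ((s :: nil) :: nil)
| R_BQ s t : ~ closed A -> A (mkeq (Base o) s t) ->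
    instance A ((s :: t :: nil) :: (mkneg s :: mkneg t :: nil) :: nil)
| R_BE s t : ~ closed A -> A (mkneq (Base o) s t) ->
    instance A ((s :: mkneg t :: nil) :: (mkneg s :: t :: nil) :: nil)
| R_FQ S T s t u : ~ closed A -> A (mkeq (Arr S T) s t) ->
    has_ty u S -> normal u ->
    instance A ((mkeq T (nf (Ap s u)) (nf (Ap t u)) :: nil) :: nil)
| R_FE S T s t x : ~ closed A -> A (mkneq (Arr S T) s t) ->
    isvar x -> nty x = S -> (forall f, A f -> ~ free x f) ->
    (forall y, isvar y -> nty y = S ->
       ~ A (mkneq T (nf (Ap s (Nm y))) (nf (Ap t (Nm y))))) ->
    instance A ((mkneq T (nf (Ap s (Nm x))) (nf (Ap t (Nm x))) :: nil) :: nil)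
| R_Mat x tys ss ts : (ss <> nil -> ~ closed A) ->
    isvar x -> nty x = arrows tys (Base o) ->
    length ss = length tys -> length ts = length tys ->
    A (apps (Nm x) ss) -> A (mkneg (apps (Nm x) ts)) ->
    instance A (dec_alts tys ss ts)
| R_Dec x a tys ss ts : (ss <> nil -> ~ closed A) ->
    isvar x -> sort a -> nty x = arrows tys (Base a) ->
    length ss = length tys -> length ts = length tys ->
    A (mkneq (Base a) (apps (Nm x) ss) (apps (Nm x) ts)) ->
    instance A (dec_alts tys ss ts)
| R_Con a s t u v : ~ closed A -> sort a ->
    A (mkeq (Base a) s t) -> A (mkneq (Base a) u v) ->
    instance A ((mkneq (Base a) s u :: mkneq (Base a) t u :: nil) ::
                (mkneq (Base a) s v :: mkneq (Base a) t v :: nil) :: nil).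

Inductive refutable : branch -> Prop :=
| ref_step A alts : fin_branch A -> instance A alts ->
    (forall F, In F alts -> refutable (ext A F)) -> refutable A.

Definition GammaT : branch -> Prop :=
  fun A => fin_branch A /\ ~ refutable A.

Definition acc (G : branch -> Prop) : Prop :=
  (forall A, G A -> is_branch A) /\
  forall A, G A ->
  (forall s, A (mkneg (mkneg s)) -> G (ext A (s :: nil))) /\
  (forall s t, A (mkeq (Base o) s t) ->
     G (ext A (s :: t :: nil)) \/ G (ext A (mkneg s :: mkneg t :: nil))) /\
  (forall s t, A (mkneq (Base o) s t) ->
     G (ext A (s :: mkneg t :: nil)) \/ G (ext A (mkneg s :: t :: nil))) /\
  (forall S T s t, A (mkeq (Arr S T) s t) ->
     forall u, has_ty u S -> normal u ->
     G (ext A (mkeq T (nf (Ap s u)) (nf (Ap t u)) :: nil))) /\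
  (forall S T s t, A (mkneq (Arr S T) s t) ->
     exists x, isvar x /\ nty x = S /\
       G (ext A (mkneq T (nf (Ap s (Nm x))) (nf (Ap t (Nm x))) :: nil))) /\
  (forall x tys ss ts, isvar x -> nty x = arrows tys (Base o) ->
     length ss = length tys -> length ts = length tys ->
     A (apps (Nm x) ss) -> A (mkneg (apps (Nm x) ts)) ->
     ss <> nil /\ exists F, In F (dec_alts tys ss ts) /\ G (ext A F)) /\
  (forall x a tys ss ts, isvar x -> sort a -> nty x = arrows tys (Base a) ->
     length ss = length tys -> length ts = length tys ->
     A (mkneq (Base a) (apps (Nm x) ss) (apps (Nm x) ts)) ->
     ss <> nil /\ exists F, In F (dec_alts tys ss ts) /\ G (ext A F)) /\
  (forall a s t u v, sort a ->
     A (mkeq (Base a) s t) -> A (mkneq (Base a) u v) ->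
     G (ext A (mkneq (Base a) s u :: mkneq (Base a) t u :: nil)) \/
     G (ext A (mkneq (Base a) s v :: mkneq (Base a) t v :: nil))).

End Setting.

From mathcomp Require Import ssreflect ssrfun ssrbool eqtype choice.
From Stdlib Require Import List Classical FunctionalExtensionality PropExtensionality.

(* A branch A of Gamma_T is not refutable, so for every admitted rule instance
   A / A_1 ... A_n some alternative A_i is not refutable either: otherwise the
   instance itself would refute A.  The alternatives are again finite branches,
   because the rules only add well-typed normal formulas; this follows from the
   types of the logical constants and from [nf] commuting with head-variable
   applications.  Each condition of an abstract consistency class is then such a
   rule instance, with two twists: Mat and Dec with n = 0 would close A, and
   closed branches are refutable; and for FE, either restriction (2) blocks the
   rule because the required formula is already on A, or FE applies with a
   variable that is fresh since A is finite and names are not. *)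

Set Implicit Arguments.
Unset Strict Implicit.

Lemma arrows_inj (B : Type) (l1 l2 : list (ty B)) b1 b2 :
  length l1 = length l2 -> arrows l1 b1 = arrows l2 b2 -> l1 = l2.
Proof.
elim: l1 l2 => [|a l IH] [|c l2] //= [] /IH eq_l [] -> /eq_l ->; done.
Qed.

Lemma apps_inj (N : Type) (h1 h2 : tm N) l1 l2 :
  length l1 = length l2 -> apps h1 l1 = apps h2 l2 -> h1 = h2 /\ l1 = l2.
Proof.
elim: l1 h1 h2 l2 => [|a l IH] h1 h2 [|b l2] //= [eq_len].
move=> /(IH _ _ _ eq_len) [eq_h ->].
by case: eq_h => -> ->.
Qed.

Lemma map_id_Forall (T : Type) (f : T -> T) (l : list T) :
  map f l = l <-> Forall (fun x => f x = x) l.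
Proof.
elim: l => [|a l IH] /=; first by split.
rewrite Forall_cons_iff -IH; split; first by case.
by case=> -> ->.
Qed.

Definition ty_dom (B : Type) (T : ty B) : ty B := if T is Arr T1 _ then T1 else T.

Fixpoint tm_names {N : Type} (t : tm N) : list N :=
  match t with
  | Nm y => y :: nil
  | Ap s u => tm_names s ++ tm_names u
  | Lm y u => y :: tm_names u
  end.

Lemma free_tm_names (N : Type) (x : N) t : free x t -> In x (tm_names t).
Proof.
elim: t => [y | s IHs u IHu | y u IH] /=; first by move=> ->; left.
  by rewrite in_app_iff => -[/IHs | /IHu]; auto.
by move=> [_ /IH]; right.
Qed.

Lemma ext_id (N : Type) (A : @branch N) F : (forall u, In u F -> A u) -> ext A F = A.
Proof.
move=> FA; apply: functional_extensionality => u; apply: propositional_extensionality.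
by split=> [[// | /FA] | Au]; [| left].
Qed.

Section Typing.
Variables (B : Type) (o : B) (N : Type) (nty : N -> ty B) (neg : N) (eqn : ty B -> N).
Hypothesis nty_neg : nty neg = Arr (Base o) (Base o).
Hypothesis nty_eqn : forall T, nty (eqn T) = Arr T (Arr T (Base o)).

Lemma has_ty_Nm x U : has_ty nty (Nm x) U <-> nty x = U.
Proof. by split=> [H | <-]; [inversion H | constructor]. Qed.

Lemma has_ty_Ap s t U :
  has_ty nty (Ap s t) U <-> exists T, has_ty nty s (Arr T U) /\ has_ty nty t T.
Proof. by split=> [H | [T [Hs Ht]]]; [inversion H; eauto | econstructor; eauto]. Qed.

Lemma has_ty_mkneg s U :
  has_ty nty (mkneg neg s) U <-> has_ty nty s (Base o) /\ U = Base o.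
Proof.
rewrite has_ty_Ap; split=> [[T [/has_ty_Nm]] | [Hs ->]].
  by rewrite nty_neg => -[-> ->].
by exists (Base o); rewrite has_ty_Nm.
Qed.

Lemma has_ty_mkeq T s t U :
  has_ty nty (mkeq eqn T s t) U <->
  [/\ has_ty nty s T, has_ty nty t T & U = Base o].
Proof.
rewrite has_ty_Ap; split=> [[T1 [/has_ty_Ap [T2 [/has_ty_Nm]]]] | [Hs Ht ->]].
  by rewrite nty_eqn => -[-> -> ->].
by exists T; split=> //; rewrite has_ty_Ap; exists T; rewrite has_ty_Nm.
Qed.

Lemma has_ty_mkneq T s t U :
  has_ty nty (mkneq neg eqn T s t) U <->
  [/\ has_ty nty s T, has_ty nty t T & U = Base o].
Proof.
rewrite /mkneq has_ty_mkneg has_ty_mkeq.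
by split=> [[[Hs Ht _] ->] | [Hs Ht ->]].
Qed.

Lemma has_ty_apps h ss U :
  has_ty nty (apps h ss) U ->
  exists Ts, has_ty nty h (arrows Ts U) /\ Forall2 (has_ty nty) ss Ts.
Proof.
elim: ss h => [|a l IH] h /=; first by exists nil.
move=> /IH [Ts [/has_ty_Ap [T [Hh Ha]] Hl]].
by exists (T :: Ts); split; last constructor.
Qed.

End Typing.

Section Normality.
Variables (B : Type) (o : B) (N : Type) (nty : N -> ty B) (neg : N) (eqn : ty B -> N).
Variable nf : tm N -> tm N.
Hypothesis nty_neg : nty neg = Arr (Base o) (Base o).
Hypothesis nty_eqn : forall T, nty (eqn T) = Arr T (Arr T (Base o)).
Hypothesis nf_ty : forall s T, has_ty nty s T -> has_ty nty (nf s) T.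
Hypothesis nf_idem : forall s T, has_ty nty s T -> nf (nf s) = nf s.
Hypothesis nf_head : forall x ss b, has_ty nty (apps (Nm x) ss) (Base b) ->
  nf (apps (Nm x) ss) = apps (Nm x) (map nf ss).

Definition normal_tm (T : ty B) (s : tm N) : Prop := has_ty nty s T /\ normal nf s.

Local Notation formula := (normal_tm (Base o)).

Lemma normal_tm_nf s T : has_ty nty s T -> normal_tm T (nf s).
Proof. by move=> Hs; split; [apply: nf_ty Hs | apply: nf_idem Hs]. Qed.

Lemma normal_apps x ss b :
  has_ty nty (apps (Nm x) ss) (Base b) ->
  normal nf (apps (Nm x) ss) <-> Forall (normal nf) ss.
Proof.
move=> Hx; rewrite /normal (nf_head Hx) -map_id_Forall.
split=> [/apps_inj [|_ //] | ->]; last by [].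
by rewrite length_map.
Qed.

Lemma normal_tm_mkneg s : formula (mkneg neg s) <-> formula s.
Proof.
split=> [[Ht Hn] | [Hs Hn]].
  have [Hs _] := (has_ty_mkneg nty_neg s (Base o)).1 Ht.
  by split=> //; apply: Forall_inv ((normal_apps (ss := s :: nil) Ht).1 Hn).
have Ht : has_ty nty (mkneg neg s) (Base o) by apply/(has_ty_mkneg nty_neg).
by split=> //; apply: (normal_apps (ss := s :: nil) Ht).2; constructor.
Qed.

Lemma normal_tm_mkeq T s t :
  formula (mkeq eqn T s t) <-> normal_tm T s /\ normal_tm T t.
Proof.
split=> [[Ht Hn] | [[Hs Ns] [Htt Nt]]].
  have [Hs Htt _] := (has_ty_mkeq nty_eqn T s t (Base o)).1 Ht.
  have := (normal_apps (ss := s :: t :: nil) Ht).1 Hn.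
  by move=> /Forall_cons_iff [Ns /Forall_cons_iff [Nt _]].
have Ht : has_ty nty (mkeq eqn T s t) (Base o) by apply/(has_ty_mkeq nty_eqn).
by split=> //; apply: (normal_apps (ss := s :: t :: nil) Ht).2; repeat constructor.
Qed.

Lemma normal_tm_mkneq T s t :
  formula (mkneq neg eqn T s t) <-> normal_tm T s /\ normal_tm T t.
Proof. by rewrite normal_tm_mkneg normal_tm_mkeq. Qed.

Lemma normal_tm_apps x tys ss b :
  nty x = arrows tys (Base b) -> length ss = length tys ->
  normal_tm (Base b) (apps (Nm x) ss) -> Forall2 (fun s T => normal_tm T s) ss tys.
Proof.
move=> Hx Hlen [Ht Hn].
have [Ts [/has_ty_Nm HxT Hss]] := has_ty_apps Ht.
have Ets : Ts = tys.
  by apply: (arrows_inj _ (etrans (esym HxT) Hx)); rewrite -(Forall2_length Hss).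
have Nss := (normal_apps Ht).1 Hn.
rewrite -Ets; elim: Hss Nss {Hlen Ht Hn Ets} => // s T l l' Hs _ IH /Forall_cons_iff [Ns Nl].
by constructor; [split | exact: IH].
Qed.

Lemma normal_tm_dec_alts tys ss ts :
  Forall2 (fun s T => normal_tm T s) ss tys -> Forall2 (fun s T => normal_tm T s) ts tys ->
  forall F, In F (dec_alts neg eqn tys ss ts) -> forall u, In u F -> formula u.
Proof.
move=> Hss Hts F /in_map_iff [[T [s t]] [<- Hp]] u [<- | []] /=.
apply/normal_tm_mkneq.
elim: Hss ts Hts Hp => // s0 T0 l l' Hs0 _ IH [|t0 ts] Hts //.
inversion_clear Hts as [|? ? ? ? Ht0 Hts'].
by case=> [[<- <- <-] | /(IH _ Hts')].
Qed.

End Normality.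

Section Consistency.
Variables (B : Type) (o : B) (N : Type) (nty : N -> ty B) (neg : N) (eqn : ty B -> N).
Variable nf : tm N -> tm N.
Hypothesis nty_neg : nty neg = Arr (Base o) (Base o).
Hypothesis nty_eqn : forall T, nty (eqn T) = Arr T (Arr T (Base o)).
Hypothesis names_infinite : forall (T : ty B) (l : list N), exists x, nty x = T /\ ~ In x l.
Hypothesis nf_ty : forall s T, has_ty nty s T -> has_ty nty (nf s) T.
Hypothesis nf_idem : forall s T, has_ty nty s T -> nf (nf s) = nf s.
Hypothesis nf_head : forall x ss b, has_ty nty (apps (Nm x) ss) (Base b) ->
  nf (apps (Nm x) ss) = apps (Nm x) (map nf ss).

Local Notation formula := (normal_tm nty nf (Base o)).
Local Notation fin_branch := (fin_branch o nty nf).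
Local Notation closed := (closed o nty neg eqn).
Local Notation instance := (instance o nty neg eqn nf).
Local Notation refutable := (refutable o nty neg eqn nf).
Local Notation GammaT := (GammaT o nty neg eqn nf).

Lemma closed_refutable A : fin_branch A -> closed A -> refutable A.
Proof.
move=> HA [[x [Hx [Hxo [Ax Anx]]]] | [x [a [Hx [Ha [Hxa Ax]]]]]].
  apply: (ref_step (alts := nil)) => //.
  exact: (@R_Mat _ _ _ _ _ _ _ _ x nil nil nil).
apply: (ref_step (alts := nil)) => //.
exact: (@R_Dec _ _ _ _ _ _ _ _ x a nil nil nil).
Qed.

Lemma GammaT_not_closed A : GammaT A -> ~ closed A.
Proof. by move=> [HA nrA] /(closed_refutable HA). Qed.

Lemma fin_branch_ext A F :
  fin_branch A -> (forall u, In u F -> formula u) -> fin_branch (ext A F).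
Proof.
move=> [HA [l Hl]] HF; split; first by move=> u [/HA | /HF].
by exists (l ++ F) => u; rewrite in_app_iff /ext Hl.
Qed.

Lemma GammaT_instance A alts :
  GammaT A -> instance A alts ->
  (forall F, In F alts -> forall u, In u F -> formula u) ->
  exists F, In F alts /\ GammaT (ext A F).
Proof.
move=> [HA nrA] HI Halts; apply: NNPP => noF; apply: nrA.
apply: (ref_step HA HI) => F HF; apply: NNPP => nrF; apply: noF.
by exists F; do 2!split=> //; apply: fin_branch_ext HA (Halts F HF).
Qed.

Lemma GammaT_instance1 A F :
  GammaT A -> instance A (F :: nil) -> (forall u, In u F -> formula u) ->
  GammaT (ext A F).
Proof.
move=> GA HI HF.
have HFs : forall F', In F' (F :: nil) -> forall u, In u F' -> formula u.
  by move=> F' [<- | []].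
by have [F' [[<- | []] GF']] := GammaT_instance GA HI HFs.
Qed.

Lemma GammaT_instance2 A F1 F2 :
  GammaT A -> instance A (F1 :: F2 :: nil) ->
  (forall u, In u F1 -> formula u) -> (forall u, In u F2 -> formula u) ->
  GammaT (ext A F1) \/ GammaT (ext A F2).
Proof.
move=> GA HI HF1 HF2.
have HFs : forall F, In F (F1 :: F2 :: nil) -> forall u, In u F -> formula u.
  by move=> F [<- | [<- | []]].
by have [F [[<- | [<- | []]] GF]] := GammaT_instance GA HI HFs; [left | right].
Qed.

Lemma GammaT_DN A s :
  GammaT A -> A (mkneg neg (mkneg neg s)) -> GammaT (ext A (s :: nil)).
Proof.
move=> GA As; apply: (GammaT_instance1 GA (R_DN _ (GammaT_not_closed GA) As)).
move=> u [<- | []]; move: (GA.1.1 _ As).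
by move=> /(normal_tm_mkneg nty_neg nf_head) /(normal_tm_mkneg nty_neg nf_head).
Qed.

Lemma GammaT_BQ A s t :
  GammaT A -> A (mkeq eqn (Base o) s t) ->
  GammaT (ext A (s :: t :: nil)) \/
  GammaT (ext A (mkneg neg s :: mkneg neg t :: nil)).
Proof.
move=> GA Ast; have [Fs Ft] := (normal_tm_mkeq nty_eqn nf_head _ _ _).1 (GA.1.1 _ Ast).
apply: (GammaT_instance2 GA (R_BQ _ (GammaT_not_closed GA) Ast)).
  by move=> u [<- | [<- | []]].
by move=> u [<- | [<- | []]]; apply/(normal_tm_mkneg nty_neg nf_head).
Qed.

Lemma GammaT_BE A s t :
  GammaT A -> A (mkneq neg eqn (Base o) s t) ->
  GammaT (ext A (s :: mkneg neg t :: nil)) \/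
  GammaT (ext A (mkneg neg s :: t :: nil)).
Proof.
move=> GA Ast.
have [Fs Ft] := (normal_tm_mkneq nty_neg nty_eqn nf_head _ _ _).1 (GA.1.1 _ Ast).
apply: (GammaT_instance2 GA (R_BE _ (GammaT_not_closed GA) Ast));
  by move=> u [<- | [<- | []]] //; apply/(normal_tm_mkneg nty_neg nf_head).
Qed.

Lemma GammaT_FQ A S T s t u :
  GammaT A -> A (mkeq eqn (Arr S T) s t) -> has_ty nty u S -> normal nf u ->
  GammaT (ext A (mkeq eqn T (nf (Ap s u)) (nf (Ap t u)) :: nil)).
Proof.
move=> GA Ast Hu Nu; have [Hs Ht _] := (has_ty_mkeq nty_eqn _ _ _ _).1 (GA.1.1 _ Ast).1.
apply: (GammaT_instance1 GA (R_FQ (GammaT_not_closed GA) Ast Hu Nu)) => v [<- | []].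
by apply/(normal_tm_mkeq nty_eqn nf_head); split; apply: (normal_tm_nf nf_ty nf_idem);
  apply/has_ty_Ap; exists S.
Qed.

Lemma fresh_var (A : @branch N) S :
  finite A -> exists x, [/\ isvar neg eqn x, nty x = S & forall f, A f -> ~ free x f].
Proof.
move=> [l Hl].
(* Of all the equality constants only [eqn (ty_dom S)] can have type [S]. *)
have [x [HxS Hnin]] := names_infinite S (neg :: eqn (ty_dom S) :: flat_map tm_names l).
exists x; split=> //.
  split=> [Ex | T Ex]; apply: Hnin; first by left.
  by right; left; rewrite Ex; move: HxS; rewrite Ex nty_eqn => <-.
move=> f Af xf; apply: Hnin; right; right; apply/in_flat_map.
by exists f; split; [apply/Hl | apply: free_tm_names].
Qed.

Lemma GammaT_FE A S T s t :
  GammaT A -> A (mkneq neg eqn (Arr S T) s t) ->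
  exists x, isvar neg eqn x /\ nty x = S /\
    GammaT (ext A (mkneq neg eqn T (nf (Ap s (Nm x))) (nf (Ap t (Nm x))) :: nil)).
Proof.
move=> GA Ast.
have [Hs Ht _] := (has_ty_mkneq nty_neg nty_eqn _ _ _ _).1 (GA.1.1 _ Ast).1.
case: (classic (exists y, [/\ isvar neg eqn y, nty y = S &
    A (mkneq neg eqn T (nf (Ap s (Nm y))) (nf (Ap t (Nm y))))])) => [[y [Hy HyS Ay]] | noy].
  by exists y; split=> //; split=> //; rewrite ext_id // => v [<- | []].
have [x [Hx HxS Hfree]] := fresh_var S GA.1.2.
exists x; split=> //; split=> //.
have nrx : forall y, isvar neg eqn y -> nty y = S ->
    ~ A (mkneq neg eqn T (nf (Ap s (Nm y))) (nf (Ap t (Nm y)))).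
  by move=> y Hy HyS Ay; apply: noy; exists y.
apply: (GammaT_instance1 GA (R_FE (GammaT_not_closed GA) Ast Hx HxS Hfree nrx)).
move=> v [<- | []]; apply/(normal_tm_mkneq nty_neg nty_eqn nf_head).
by split; apply: (normal_tm_nf nf_ty nf_idem); apply/has_ty_Ap; exists S;
  rewrite has_ty_Nm.
Qed.

Lemma GammaT_Mat A x tys ss ts :
  GammaT A -> isvar neg eqn x -> nty x = arrows tys (Base o) ->
  length ss = length tys -> length ts = length tys ->
  A (apps (Nm x) ss) -> A (mkneg neg (apps (Nm x) ts)) ->
  ss <> nil /\ exists F, In F (dec_alts neg eqn tys ss ts) /\ GammaT (ext A F).
Proof.
move=> GA Hx Hxt Hls Hlt As Ant.
have Fss := normal_tm_apps nf_head Hxt Hls (GA.1.1 _ As).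
have Fts := normal_tm_apps nf_head Hxt Hlt
  ((normal_tm_mkneg nty_neg nf_head _).1 (GA.1.1 _ Ant)).
split.
  move=> Ess; apply: (GammaT_not_closed GA); left; exists x.
  by move: Hls Hlt Hxt As Ant {Fss Fts}; rewrite Ess; case: tys => //; case: ts.
apply: (GammaT_instance GA (R_Mat nf (fun _ => GammaT_not_closed GA) Hx Hxt Hls Hlt As Ant)).
exact: (normal_tm_dec_alts nty_neg nty_eqn nf_head Fss Fts).
Qed.

Lemma GammaT_Dec A x a tys ss ts :
  GammaT A -> isvar neg eqn x -> sort o a -> nty x = arrows tys (Base a) ->
  length ss = length tys -> length ts = length tys ->
  A (mkneq neg eqn (Base a) (apps (Nm x) ss) (apps (Nm x) ts)) ->
  ss <> nil /\ exists F, In F (dec_alts neg eqn tys ss ts) /\ GammaT (ext A F).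
Proof.
move=> GA Hx Ha Hxt Hls Hlt Ast.
have [Fs Ft] := (normal_tm_mkneq nty_neg nty_eqn nf_head _ _ _).1 (GA.1.1 _ Ast).
have Fss := normal_tm_apps nf_head Hxt Hls Fs.
have Fts := normal_tm_apps nf_head Hxt Hlt Ft.
split.
  move=> Ess; apply: (GammaT_not_closed GA); right; exists x, a.
  by move: Hls Hlt Hxt Ast {Fs Ft Fss Fts}; rewrite Ess; case: tys => //; case: ts.
apply: (GammaT_instance GA (R_Dec nf (fun _ => GammaT_not_closed GA) Hx Ha Hxt Hls Hlt Ast)).
exact: (normal_tm_dec_alts nty_neg nty_eqn nf_head Fss Fts).
Qed.

Lemma GammaT_Con A a s t u v :
  GammaT A -> sort o a ->
  A (mkeq eqn (Base a) s t) -> A (mkneq neg eqn (Base a) u v) ->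
  GammaT (ext A (mkneq neg eqn (Base a) s u :: mkneq neg eqn (Base a) t u :: nil)) \/
  GammaT (ext A (mkneq neg eqn (Base a) s v :: mkneq neg eqn (Base a) t v :: nil)).
Proof.
move=> GA Ha Ast Auv.
have [Fs Ft] := (normal_tm_mkeq nty_eqn nf_head _ _ _).1 (GA.1.1 _ Ast).
have [Fu Fv] := (normal_tm_mkneq nty_neg nty_eqn nf_head _ _ _).1 (GA.1.1 _ Auv).
apply: (GammaT_instance2 GA (R_Con nf (GammaT_not_closed GA) Ha Ast Auv));
  by move=> w [<- | [<- | []]]; apply/(normal_tm_mkneq nty_neg nty_eqn nf_head).
Qed.

Lemma GammaT_acc : acc o nty neg eqn nf GammaT.
Proof.
split=> [A [[]] // | A GA].
split; first by move=> s; apply: GammaT_DN GA.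
split; first by move=> s t; apply: GammaT_BQ GA.
split; first by move=> s t; apply: GammaT_BE GA.
split; first by move=> S T s t Ast u; apply: GammaT_FQ GA Ast.
split; first by move=> S T s t; apply: GammaT_FE GA.
split; first by move=> x tys ss ts; apply: GammaT_Mat GA.
split; first by move=> x a tys ss ts; apply: GammaT_Dec GA.
by move=> a s t u v; apply: GammaT_Con GA.
Qed.

End Consistency.

Theorem lemma9p1
  (B : countType) (o : B) (N : countType) (nty : N -> ty B)
  (neg : N) (eqn : ty B -> N) (nf : tm N -> tm N)
  (* logical constants *)
  (Hneg : nty neg = Arr (Base o) (Base o))
  (Heqn : forall T, nty (eqn T) = Arr T (Arr T (Base o)))
  (* infinitely many names of each type *)
  (Hinf : forall (T : ty B) (l : list N), exists x, nty x = T /\ ~ In x l)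
  (* the normalization operator *)
  (Hnf_ty : forall s T, has_ty nty s T -> has_ty nty (nf s) T)
  (Hnf_idem : forall s T, has_ty nty s T -> nf (nf s) = nf s)
  (Hnf_app : forall s t S T, has_ty nty s (Arr S T) -> has_ty nty t S ->
       nf (Ap (nf s) t) = nf (Ap s t))
  (Hnf_head : forall x ss b, has_ty nty (apps (Nm x) ss) (Base b) ->
       nf (apps (Nm x) ss) = apps (Nm x) (map nf ss)) :
  acc o nty neg eqn nf (GammaT o nty neg eqn nf).
Proof.
exact: GammaT_acc Hneg Heqn Hinf Hnf_ty Hnf_idem Hnf_head.
Qed.
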